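(* For a complex double sequence $\{a_{kl}\}_{k,l\ge1}$ and integers $m,n\ge0$ let $Q_{m,n}:=[2^m,2^{m+1}]\times[2^n,2^{n+1}]$ and $A_{mn}:=\max_{(k,l)\in Q_{m,n}\cap\mathbb{N}^2}|a_{kl}|$. Let $T>0$. (a) For any sequence $\{a_{kl}\}\in GM^c_1$ with constant $C$, there exist $c,v>0$, depending only on $C$ and $T$, such that for every $(m,n)$, $m,n\ge1$, with $A_{m-1,n-1}\le T A_{mn}$, there exists a rectangle $Q'_{m-1,n-1}\subset Q_{m-1,n-1}$ of size $2^{m-v}\times2^{n-v}$ satisfying $$\Big|\sum_{(k,l)\in Q'_{m-1,n-1}\cap\mathbb{N}^2}a_{kl}\Big|>c\,2^{m+n}A_{mn}.$$ (b) For any sequence $\{a_{kl}\}\in GM^c_2$ with constant $C$, there exist $c,v>0$, depending only on $C$ and $T$, such that for every $(m,n)$, $m\ge0$, $n\ge1$, with $A_{m+1,n-1}\le T A_{mn}$, there exists a rectangle $Q'_{m+1,n-1}\subset Q_{m+1,n-1}$ of size $2^{m-v}\times2^{n-v}$ satisfying $$\Big|\sum_{(k,l)\in Q'_{m+1,n-1}\cap\mathbb{N}^2}a_{kl}\Big|>c\,2^{m+n}A_{mn}.$$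
   Context: $\Delta^{11}a_{mn}:=a_{mn}-a_{m+1,n}-a_{m,n+1}+a_{m+1,n+1}$. A double sequence $\{a_{mn}\}_{m,n\ge1}$ belongs to $GM^c_1$ (with constant $C$) if $a_{mn}\to0$ as $m+n\to\infty$ and for all $k,l\in\mathbb{N}$, $$\sum_{m=k}^{2k}\sum_{n=l}^{\infty}|\Delta^{11}a_{mn}|+\sum_{m=k}^{\infty}\sum_{n=l}^{2l}|\Delta^{11}a_{mn}|\le C|a_{kl}|;$$ it belongs to $GM^c_2$ (with constant $C$) if $a_{mn}\to0$ as $m+n\to\infty$ and for all $k,l$ the same left-hand side is $\le C|a_{2k,l}|$. A rectangle of size $\alpha\times\beta$ means a set $[s_1,s_1+\alpha]\times[t_1,t_1+\beta]$. *)

From mathcomp Require Import all_boot all_order all_algebra.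
From mathcomp Require Import all_classical all_reals all_analysis.
From mathcomp Require Import complex.
Set Implicit Arguments. Unset Strict Implicit. Unset Printing Implicit Defensive.
Import Order.TTheory GRing.Theory Num.Theory.
Local Open Scope ring_scope.

Section Defs.
Variable R : realType.

Definition cabs (z : R[i]) : R := complex.Re `|z|.

Definition D11 (a : nat -> nat -> R[i]) (m n : nat) : R[i] :=
  a m n - a m.+1 n - a m n.+1 + a m.+1 n.+1.

Definition gm_lhs (a : nat -> nat -> R[i]) (k l : nat) : \bar R :=
  (\sum_(k <= m < (2 * k).+1) \sum_(l <= n <oo) (cabs (D11 a m n))%:E
   + \sum_(k <= m <oo) \sum_(l <= n < (2 * l).+1) (cabs (D11 a m n))%:E)%E.

Definition tends0 (a : nat -> nat -> R[i]) : Prop :=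
  forall e : R, 0 < e -> exists N : nat, forall m n : nat,
    (1 <= m)%N -> (1 <= n)%N -> (N <= m + n)%N -> cabs (a m n) < e.

(* the classes GM^c_1 and GM^c_2 with constant C; a is indexed by k,l >= 1,
   the values at index 0 are irrelevant *)
Definition GM1 (C : R) (a : nat -> nat -> R[i]) : Prop :=
  tends0 a /\ forall k l : nat, (1 <= k)%N -> (1 <= l)%N ->
    (gm_lhs a k l <= (C * cabs (a k l))%:E)%E.

Definition GM2 (C : R) (a : nat -> nat -> R[i]) : Prop :=
  tends0 a /\ forall k l : nat, (1 <= k)%N -> (1 <= l)%N ->
    (gm_lhs a k l <= (C * cabs (a (2 * k)%N l))%:E)%E.

Definition Amax (a : nat -> nat -> R[i]) (m n : nat) : R :=
  \big[Num.max/0]_(2 ^ m <= k < (2 ^ m.+1).+1)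
    \big[Num.max/0]_(2 ^ n <= l < (2 ^ n.+1).+1) cabs (a k l).

Definition rect_in_Q (p q : nat) (s t al be : R) : Prop :=
  (2 ^+ p)%:R <= s /\ s + al <= (2 ^+ p.+1)%:R /\
  (2 ^+ q)%:R <= t /\ t + be <= (2 ^+ q.+1)%:R.

(* sum of a_{kl} over the lattice points of the rectangle
   [s, s+al] x [t, t+be], restricted to the lattice points of Q_{p,q}
   (equal to the full lattice sum when the rectangle lies in Q_{p,q}) *)
Definition rect_sum (a : nat -> nat -> R[i]) (p q : nat) (s t al be : R)
  : R[i] :=
  \sum_(2 ^ p <= k < (2 ^ p.+1).+1) \sum_(2 ^ q <= l < (2 ^ q.+1).+1)
     (if (s <= k%:R <= s + al) && (t <= l%:R <= t + be) then a k l else 0).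

End Defs.

(* Telescoping mixed differences (this is where a -> 0 is used) bounds
   |a_pq - a_p'q'| for (p',q') in [p,2p] x [q,2q] by the variation of the
   rows and columns entering gm_lhs a p q.  Applied at corners of dyadic blocks
   this gives, first, A_mn <= K |a_PQ| for every lattice point (P,Q) of the block
   Q' = Q_{m-1,n-1} (resp. Q_{m+1,n-1} with P even), K = (1+C)^2 (resp.
   (1+2C)^2); and second, through A(Q') <= T A_mn, that the variation entering
   gm_lhs at the corner of Q' is at most C T A_mn.  Cutting the rows of Q' into
   2^(v-1) strips of width 2^(m-v), and the columns likewise, some row strip and
   some column strip carry at most a 2^(1-v) share of that variation, so on the
   box where they cross a oscillates by at most A_mn / (2K) once v is large.
   As |a| >= A_mn / K somewhere on that box, its lattice sum has modulus at
   least (number of points) A_mn / (2K), which is of order 2^(m+n) A_mn. *)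

From mathcomp Require Import all_boot all_order all_algebra.
From mathcomp Require Import all_classical all_reals all_analysis.
From mathcomp Require Import complex.
From mathcomp Require Import ring lra zify.
Set Implicit Arguments. Unset Strict Implicit. Unset Printing Implicit Defensive.
Import Order.TTheory GRing.Theory Num.Theory.
Local Open Scope ring_scope.

Section Cabs.
Local Open Scope complex_scope.
Variable R : realType.
Implicit Types x y z : R[i].

Lemma cabsE x : (cabs x)%:C = `|x|.
Proof. by rewrite /cabs normc_def. Qed.

Lemma cabs_ge0 x : 0 <= cabs x.
Proof. by rewrite -ler0c cabsE. Qed.

Lemma cabs0 : cabs (0 : R[i]) = 0.
Proof. by apply: complexI; rewrite cabsE normr0. Qed.

Lemma cabsN x : cabs (- x) = cabs x.
Proof. by apply: complexI; rewrite !cabsE normrN. Qed.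

Lemma cabs_distC x y : cabs (x - y) = cabs (y - x).
Proof. by apply: complexI; rewrite !cabsE distrC. Qed.

Lemma cabsMn x n : cabs (x *+ n) = cabs x *+ n.
Proof. by apply: complexI; rewrite rmorphMn /= !cabsE normrMn. Qed.

Lemma cabsD x y : cabs (x + y) <= cabs x + cabs y.
Proof. by rewrite -lecR rmorphD /= !cabsE ler_normD. Qed.

Lemma cabs_distD x y z : cabs (x - z) <= cabs (x - y) + cabs (y - z).
Proof. by rewrite -lecR rmorphD /= !cabsE ler_distD. Qed.

Lemma cabs_le_dist x y : cabs y <= cabs x + cabs (x - y).
Proof. by have := cabs_distD y x 0; rewrite !subr0 cabs_distC addrC. Qed.

Lemma cabs_sum (I : Type) (r : seq I) (F : I -> R[i]) :
  cabs (\sum_(i <- r) F i) <= \sum_(i <- r) cabs (F i).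
Proof.
rewrite -lecR cabsE rmorph_sum; apply: le_trans (ler_norm_sum _ _ _) _.
by rewrite le_eqVlt (eq_bigr _ (fun i _ => cabsE (F i))) eqxx.
Qed.

End Cabs.

Section Variation.
Variable R : realType.
Implicit Types (a : nat -> nat -> R[i]) (f : nat -> \bar R).

Definition row_variation a l i : \bar R := \sum_(l <= j <oo) (cabs (D11 a i j))%:E.
Definition col_variation a k j : \bar R := \sum_(k <= i <oo) (cabs (D11 a i j))%:E.
Definition transpose a : nat -> nat -> R[i] := fun i j => a j i.

Lemma lee_sum_nneg_subrange f m p p' n :
  (forall i, (0 <= f i)%E) -> (m <= p)%N -> (p <= p')%N -> (p' <= n)%N ->
  (\sum_(p <= i < p') f i <= \sum_(m <= i < n) f i)%E.
Proof.
move=> f0 mp pp' p'n.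
apply: le_trans (@lee_sum_nneg_natr _ _ xpredT p (fun i _ _ => f0 i) _ _ p'n) _.
exact: (@lee_sum_nneg_natl _ _ xpredT n (fun i _ _ => f0 i) _ _ mp).
Qed.

Lemma nneseries_tail_le f l l' :
  (forall i, (0 <= f i)%E) -> (l <= l')%N ->
  (\sum_(l' <= i <oo) f i <= \sum_(l <= i <oo) f i)%E.
Proof.
move=> f0 ll'; rewrite (nneseries_split l (l' - l)) => [|i _]; last exact: f0.
by rewrite subnKC //; apply: leeDr; apply: sume_ge0 => i _; exact: f0.
Qed.

Lemma row_variation_ge0 a l i : (0 <= row_variation a l i)%E.
Proof. by apply: nneseries_ge0 => j _ _; rewrite lee_fin cabs_ge0. Qed.

Lemma col_variation_ge0 a k j : (0 <= col_variation a k j)%E.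
Proof. by apply: nneseries_ge0 => i _ _; rewrite lee_fin cabs_ge0. Qed.

Lemma D11_transpose a i j : D11 (transpose a) i j = D11 a j i.
Proof. rewrite /D11 /transpose; ring. Qed.

Lemma col_variation_transpose a k j :
  col_variation a k j = row_variation (transpose a) k j.
Proof. by apply: eq_eseriesr => i _; rewrite D11_transpose. Qed.

Lemma tends0_transpose a : tends0 a -> tends0 (transpose a).
Proof.
move=> a0 e e0; have [N HN] := a0 e e0; exists N => m n m1 n1 mnN.
by apply: HN => //; rewrite addnC.
Qed.

Lemma D11_telescope a i q N : (q <= N)%N ->
  \sum_(q <= j < N) D11 a i j = (a i q - a i.+1 q) - (a i N - a i.+1 N).
Proof.
move=> qN; rewrite -opprB -(telescope_sumr (fun j => a i j - a i.+1 j) qN).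
by rewrite -sumrN; apply: eq_bigr => j _; rewrite /D11; ring.
Qed.

Lemma gm_lhsE a k l :
  gm_lhs a k l = (\sum_(k <= i < (2 * k).+1) row_variation a l i
                  + \sum_(l <= j < (2 * l).+1) col_variation a k j)%E.
Proof.
congr (_ + _)%E; rewrite -nneseries_sum_nat //.
by move=> j i; rewrite lee_fin cabs_ge0.
Qed.

End Variation.

Section RowDifferences.
Variables (R : realType) (a : nat -> nat -> R[i]).
Hypothesis a_to0 : tends0 a.

Lemma cabs_sub_row_le i q : (0 < i)%N ->
  ((cabs (a i q - a i.+1 q))%:E <= row_variation a q i)%E.
Proof.
move=> i0; apply/lee_addgt0Pr => e e0.
have [N aN] := a_to0 (divr_gt0 e0 (ltr0Sn _ 1)).
set N' := maxn (maxn N q) 1.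
have qN' : (q <= N')%N by rewrite /N'; lia.
have N'0 : (0 < N')%N by rewrite leq_maxr.
have NN' j : (N <= j + N')%N by rewrite /N'; lia.
have tailN' : cabs (a i N' - a i.+1 N') <= e.
  have := aN i N' i0 N'0 (NN' i); have := aN i.+1 N' isT N'0 (NN' i.+1).
  have := cabsD (a i N') (- a i.+1 N'); rewrite cabsN; lra.
have -> : a i q - a i.+1 q = \sum_(q <= j < N') D11 a i j + (a i N' - a i.+1 N').
  by rewrite D11_telescope // subrK.
apply: (@le_trans _ _ ((\sum_(q <= j < N') cabs (D11 a i j) + e)%:E)).
  rewrite lee_fin; apply: le_trans (cabsD _ _) _.
  by apply: lerD => //; exact: cabs_sum.
rewrite EFinD leeD2r // -sumEFin.
by apply: nneseries_lim_ge => j _ _; rewrite lee_fin cabs_ge0.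
Qed.

Lemma cabs_sub_rows_le l p q d : (0 < p)%N -> (l <= q)%N ->
  ((cabs (a p q - a (p + d) q))%:E <=
     \sum_(p <= i < p + d) row_variation a l i)%E.
Proof.
move=> p0 lq; elim: d => [|d IHd]; first by rewrite addn0 subrr cabs0 big_geq.
rewrite addnS big_nat_recr ?leq_addr //=.
apply: (@le_trans _ _ ((cabs (a p q - a (p + d) q)
                        + cabs (a (p + d) q - a (p + d).+1 q))%:E)).
  by rewrite lee_fin cabs_distD.
rewrite EFinD; apply: leeD => //.
apply: le_trans (cabs_sub_row_le q _) _; first by rewrite addn_gt0 p0.
by apply: nneseries_tail_le => // j; rewrite lee_fin cabs_ge0.
Qed.

End RowDifferences.

Section Differences.
Variables (R : realType) (a : nat -> nat -> R[i]).
Hypothesis a_to0 : tends0 a.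

Lemma cabs_sub_cols_le k p q e : (0 < q)%N -> (k <= p)%N ->
  ((cabs (a p q - a p (q + e)))%:E <=
     \sum_(q <= j < q + e) col_variation a k j)%E.
Proof.
move=> q0 kp; under eq_bigr do rewrite col_variation_transpose.
exact: cabs_sub_rows_le (tends0_transpose a_to0) _ _ _ _ q0 kp.
Qed.

Lemma cabs_sub_le_variation k l p q d e :
  (0 < k)%N -> (0 < l)%N -> (k <= p)%N -> (l <= q)%N ->
  ((cabs (a p q - a (p + d) (q + e)))%:E <=
     \sum_(p <= i < p + d) row_variation a l i
     + \sum_(q <= j < q + e) col_variation a k j)%E.
Proof.
move=> k0 l0 kp lq.
apply: (@le_trans _ _ ((cabs (a p q - a (p + d) q)
                        + cabs (a (p + d) q - a (p + d) (q + e)))%:E)).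
  by rewrite lee_fin cabs_distD.
rewrite EFinD; apply: leeD; first by apply: cabs_sub_rows_le => //; lia.
by apply: cabs_sub_cols_le => //; lia.
Qed.

Lemma cabs_sub_le_gm_lhs p q p' q' : (0 < p)%N -> (0 < q)%N ->
  (p <= p' <= 2 * p)%N -> (q <= q' <= 2 * q)%N ->
  ((cabs (a p q - a p' q'))%:E <= gm_lhs a p q)%E.
Proof.
move=> p0 q0 /andP[pp' p'p] /andP[qq' q'q].
have := cabs_sub_le_variation (p' - p) (q' - q) p0 q0 (leqnn p) (leqnn q).
rewrite !subnKC // gm_lhsE => /le_trans; apply; apply: leeD.
  by apply: lee_sum_nneg_subrange => //; [exact: row_variation_ge0 | lia].
by apply: lee_sum_nneg_subrange => //; [exact: col_variation_ge0 | lia].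
Qed.

End Differences.

Section GeneralMonotone.
Variables (R : realType) (C : R) (a : nat -> nat -> R[i]).

Lemma GM1_cabs_le p q p' q' : GM1 C a -> (0 < p)%N -> (0 < q)%N ->
  (p <= p' <= 2 * p)%N -> (q <= q' <= 2 * q)%N ->
  cabs (a p' q') <= (1 + C) * cabs (a p q).
Proof.
move=> [a_to0 gm] p0 q0 hp hq.
have := le_trans (cabs_sub_le_gm_lhs a_to0 p0 q0 hp hq) (gm p q p0 q0).
rewrite lee_fin mulrDl mul1r; have := cabs_le_dist (a p q) (a p' q'); lra.
Qed.

Lemma GM2_cabs_le p q p' q' : GM2 C a -> (0 < p)%N -> (0 < q)%N ->
  (p <= p' <= 2 * p)%N -> (q <= q' <= 2 * q)%N ->
  cabs (a p' q') <= (1 + 2 * C) * cabs (a (2 * p) q).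
Proof.
move=> [a_to0 gm] p0 q0 hp hq.
have := le_trans (cabs_sub_le_gm_lhs a_to0 p0 q0 hp hq) (gm p q p0 q0).
have hpp : (p <= 2 * p <= 2 * p)%N by lia.
have hqq : (q <= q <= 2 * q)%N by lia.
have := le_trans (cabs_sub_le_gm_lhs a_to0 p0 q0 hpp hqq) (gm p q p0 q0).
rewrite !lee_fin mulrDl mul1r.
have := cabs_le_dist (a p q) (a p' q'); have := cabs_le_dist (a (2 * p) q) (a p q).
rewrite cabs_distC; lra.
Qed.

End GeneralMonotone.

Section Amax.
Variables (R : realType) (a : nat -> nat -> R[i]).

Lemma Amax_ge m n k l : (2 ^ m <= k <= 2 ^ m.+1)%N -> (2 ^ n <= l <= 2 ^ n.+1)%N ->
  cabs (a k l) <= Amax a m n.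
Proof.
move=> hk hl; rewrite /Amax.
apply: (bigmax_sup_seq _ k) => //; first by rewrite mem_index_iota ltnS.
by apply: (le_bigmax_seq _ l) => //; rewrite mem_index_iota ltnS.
Qed.

Lemma Amax_le m n B : 0 <= B ->
  (forall k l, (2 ^ m <= k <= 2 ^ m.+1)%N -> (2 ^ n <= l <= 2 ^ n.+1)%N ->
     cabs (a k l) <= B) ->
  Amax a m n <= B.
Proof.
move=> B0 aB; rewrite /Amax big_seq; apply: bigmax_le => // k.
rewrite mem_index_iota ltnS => hk; rewrite big_seq; apply: bigmax_le => // l.
by rewrite mem_index_iota ltnS => hl; exact: aB.
Qed.

End Amax.

Lemma dyadic_range k P : (2 ^ k <= P <= 2 ^ k.+1)%N -> (P <= 2 ^ k.+1 <= 2 * P)%N.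
Proof. by rewrite expnS => /andP[kP Pk]; rewrite Pk leq_mul2l kP orbT. Qed.

Section AmaxLowerBounds.
Variables (R : realType) (C : R) (a : nat -> nat -> R[i]).
Hypothesis C0 : 0 <= C.

Lemma GM1_Amax_le m n P Q : GM1 C a ->
  (P <= 2 ^ m <= 2 * P)%N -> (Q <= 2 ^ n <= 2 * Q)%N ->
  Amax a m n <= (1 + C) ^+ 2 * cabs (a P Q).
Proof.
move=> gm hP hQ; have m0 : (0 < 2 ^ m)%N by rewrite expn_gt0.
have n0 : (0 < 2 ^ n)%N by rewrite expn_gt0.
have P0 : (0 < P)%N by lia.
have Q0 : (0 < Q)%N by lia.
have corner := GM1_cabs_le gm P0 Q0 hP hQ.
apply: Amax_le => [|k l hk hl]; first by rewrite mulr_ge0 ?cabs_ge0 ?sqr_ge0.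
rewrite !expnS in hk hl.
apply: le_trans (GM1_cabs_le gm m0 n0 hk hl) _.
by rewrite expr2 -mulrA; apply: ler_wpM2l => //; rewrite addr_ge0.
Qed.

Lemma GM2_Amax_le m n k Q : GM2 C a ->
  (k <= 2 ^ m.+1 <= 2 * k)%N -> (Q <= 2 ^ n <= 2 * Q)%N ->
  Amax a m n <= (1 + 2 * C) ^+ 2 * cabs (a (2 * k) Q).
Proof.
move=> gm hk hQ; have m0 : (0 < 2 ^ m)%N by rewrite expn_gt0.
have n0 : (0 < 2 ^ n)%N by rewrite expn_gt0.
have k0 : (0 < k)%N by lia.
have Q0 : (0 < Q)%N by lia.
have corner := GM2_cabs_le gm k0 Q0 hk hQ.
apply: Amax_le => [|k' l hk' hl]; first by rewrite mulr_ge0 ?cabs_ge0 ?sqr_ge0.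
rewrite !expnS in hk' hl corner.
apply: le_trans (GM2_cabs_le gm m0 n0 hk' hl) _.
by rewrite expr2 -mulrA; apply: ler_wpM2l => //; rewrite addr_ge0 ?mulr_ge0.
Qed.

End AmaxLowerBounds.

Section BoxSums.
Variable R : realType.

Lemma cabs_sum_sub_mulrn_le (F : nat -> R[i]) c d m n :
  (forall i, (m <= i < n)%N -> cabs (F i - c) <= d) ->
  cabs (\sum_(m <= i < n) F i - c *+ (n - m)) <= d *+ (n - m).
Proof.
move=> Fc; rewrite -!sumr_const_nat -sumrB.
apply: le_trans (cabs_sum _ _) _.
exact: ler_sum_nat.
Qed.

Lemma cabs_box_sum_ge (a : nat -> nat -> R[i]) S T F G c d :
  (forall i j, (S <= i <= S + F)%N -> (T <= j <= T + G)%N -> cabs (a i j - c) <= d) ->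
  (cabs c - d) *+ (F.+1 * G.+1)
    <= cabs (\sum_(S <= i < (S + F).+1) \sum_(T <= j < (T + G).+1) a i j).
Proof.
move=> ac; have rows i : (S <= i < (S + F).+1)%N ->
    cabs (\sum_(T <= j < (T + G).+1) a i j - c *+ G.+1) <= d *+ G.+1.
  rewrite ltnS => hi; have := @cabs_sum_sub_mulrn_le (a i) c d T (T + G).+1.
  by rewrite subSn ?leq_addr // addKn; apply => j; rewrite ltnS; exact: ac.
have := cabs_sum_sub_mulrn_le rows; rewrite subSn ?leq_addr // addKn.
have := cabs_le_dist (\sum_(S <= i < (S + F).+1) \sum_(T <= j < (T + G).+1) a i j)
          ((c *+ G.+1) *+ F.+1).
rewrite !cabsMn -!mulrnA mulnC mulrnBl; lra.
Qed.

End BoxSums.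

Lemma big_nat_blocks (T : Type) (idx : T) (op : Monoid.law idx) (F : nat -> T) b L M :
  \big[op/idx]_(b <= i < b + M * L) F i =
  \big[op/idx]_(0 <= t < M) \big[op/idx]_(b + t * L <= i < b + t * L + L) F i.
Proof.
elim: M => [|M IHM]; first by rewrite mul0n addn0 !big_geq.
rewrite big_nat_recr //= -IHM mulSn addnA (addnC b) -addnA addnC.
by rewrite -big_cat_nat ?leq_addr.
Qed.

Lemma lee_wMn2r (R : realType) (x y : \bar R) n :
  (x <= y)%E -> ((x *+ n)%R <= (y *+ n)%R)%E.
Proof. by move=> xy; elim: n => // n IHn; rewrite !mulrS leeD. Qed.

Lemma ereal_exists_mulrn_le_sum (R : realType) (g : nat -> \bar R) M : (0 < M)%N ->
  exists2 t, (t < M)%N & ((g t *+ M)%R <= \sum_(0 <= i < M) g i)%E.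
Proof.
case: M => // M _.
case: (@arg_minP _ _ _ ord0 xpredT (fun i : 'I_M.+1 => g i) isT) => t _ tmin.
exists t => //.
have -> : g t *+ M.+1 = \sum_(0 <= i < M.+1) g t by rewrite sumr_const_nat subn0.
rewrite big_nat [X in (_ <= X)%E]big_nat; apply: lee_sum => i /andP[_ hi].
exact: (tmin (Ordinal hi)).
Qed.

(* Pigeonhole over M consecutive row blocks of length F and M column blocks of
   length G: the lightest of each carries at most 1/M of the variation that
   gm_lhs a k l bounds. *)
Lemma exists_flat_box (R : realType) (a : nat -> nat -> R[i]) k l F G M X :
  tends0 a -> (0 < k)%N -> (0 < l)%N -> (0 < M)%N ->
  (M * F <= k)%N -> (M * G <= l)%N -> (gm_lhs a k l <= X%:E)%E ->
  exists S T, [/\ (k <= S)%N, (S + F <= k + M * F)%N, (l <= T)%N,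
    (T + G <= l + M * G)%N &
    forall i j, (S <= i <= S + F)%N -> (T <= j <= T + G)%N ->
      cabs (a S T - a i j) *+ M <= X].
Proof.
move=> a_to0 k0 l0 M0 MFk MGl gmX.
pose rblock t := \sum_(k + t * F <= i < k + t * F + F) row_variation a l i.
pose cblock u := \sum_(l + u * G <= j < l + u * G + G) col_variation a k j.
have [t tM rt] := ereal_exists_mulrn_le_sum rblock M0.
have [u uM cu] := ereal_exists_mulrn_le_sum cblock M0.
have blocksX : (\sum_(0 <= t < M) rblock t + \sum_(0 <= u < M) cblock u <= X%:E)%E.
  rewrite /rblock /cblock -!big_nat_blocks; apply: le_trans gmX; rewrite gm_lhsE.
  apply: leeD; apply: lee_sum_nneg_subrange; rewrite ?leq_addr //.
  - exact: row_variation_ge0.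
  - lia.
  - exact: col_variation_ge0.
  - lia.
have tF : (t * F + F <= M * F)%N by rewrite addnC -mulSn leq_mul2r tM orbT.
have uG : (u * G + G <= M * G)%N by rewrite addnC -mulSn leq_mul2r uM orbT.
exists (k + t * F), (l + u * G); split.
- exact: leq_addr.
- by rewrite -addnA leq_add2l.
- exact: leq_addr.
- by rewrite -addnA leq_add2l.
move=> i j hi hj.
have osc : ((cabs (a (k + t * F) (l + u * G) - a i j))%:E <= rblock t + cblock u)%E.
  have := @cabs_sub_le_variation _ a a_to0 k l (k + t * F) (l + u * G)
    (i - (k + t * F)) (j - (l + u * G)) k0 l0 (leq_addr _ _) (leq_addr _ _).
  rewrite !subnKC; [|by case/andP: hj|by case/andP: hi] => /le_trans; apply.
  case/andP: hi => Si iS; case/andP: hj => Tj jT.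
  apply: leeD; apply: lee_sum_nneg_subrange => //.
    exact: row_variation_ge0.
  exact: col_variation_ge0.
rewrite -lee_fin raddfMn /=; apply: le_trans blocksX.
by apply: le_trans (leeD rt cu); rewrite -mulrnDl; exact: lee_wMn2r.
Qed.

(* For integral s, [s, s + 2^(m-v)] contains exactly (side m v).+1 integers. *)
Definition side (m v : nat) : nat := if (v <= m)%N then (2 ^ (m - v))%N else 0.

Lemma expn_le_side1_mul m v : (2 ^ m <= (side m v).+1 * 2 ^ v)%N.
Proof.
rewrite /side; case: (leqP v m) => [vm|mv] /=; last by rewrite mul1n leq_pexp2l // ltnW.
by rewrite mulSn -expnD subnK // leq_addl.
Qed.

Lemma side_mul_le m v p : (0 < v)%N -> (m.-1 <= p)%N -> (2 ^ v.-1 * side m v <= 2 ^ p)%N.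
Proof.
move=> v0 mp; rewrite /side; case: (leqP v m) => [vm|_]; last by rewrite muln0.
by rewrite -expnD leq_pexp2l //; lia.
Qed.

Section SideReal.
Variable R : realType.

Lemma powR_side m v : (v <= m)%N -> 2 `^ (m%:R - v%:R) = (side m v)%:R :> R.
Proof. by move=> vm; rewrite /side vm -natrB // powR_mulrn ?natrX. Qed.

Lemma powR_lt1 m v : (m < v)%N -> 2 `^ (m%:R - v%:R) < 1 :> R.
Proof.
move=> mv; have mv1 : m%:R - v%:R <= -1 :> R.
  by move: mv; rewrite -(ler_nat R) -natr1 => mv; lra.
apply: le_lt_trans (ler_powR _ mv1) _; first by rewrite ler1n.
by rewrite powR_inv1 // invf_lt1 // ltr1n.
Qed.

Lemma side_floor m v :
  (side m v)%:R <= (2 : R) `^ (m%:R - v%:R) < (side m v).+1%:R.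
Proof.
case: (leqP v m) => [vm|mv]; first by rewrite powR_side // lexx ltr_nat /=.
by rewrite /side leqNgt mv /= powR_ge0 powR_lt1.
Qed.

Lemma powR_le_maxn_side1 m v : (2 : R) `^ (m%:R - v%:R) <= (maxn (side m v) 1)%:R.
Proof.
case: (leqP v m) => [vm|mv]; first by rewrite powR_side // ler_nat leq_maxl.
by rewrite /side leqNgt mv /=; exact/ltW/powR_lt1.
Qed.

End SideReal.

Section RectSums.
Variable R : realType.

Lemma ler_nat_window (S i F : nat) (L : R) : F%:R <= L < F.+1%:R ->
  (S%:R <= (i%:R : R) <= S%:R + L) = (S <= i <= S + F)%N.
Proof.
case/andP=> FL LF; rewrite ler_nat; congr andb; apply/idP/idP => hi.
  by rewrite -ltnS -(ltr_nat R) -natr1 natrD; lra.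
by move: hi; rewrite -(ler_nat R) natrD => hi; lra.
Qed.

Lemma big_nat_window (f : nat -> R[i]) lo hi S F :
  (lo <= S)%N -> (S + F <= hi)%N ->
  \sum_(lo <= i < hi.+1) (if (S <= i <= S + F)%N then f i else 0) =
  \sum_(S <= i < (S + F).+1) f i.
Proof.
move=> loS SFhi; rewrite -big_mkcond [RHS](big_nat_widen _ _ hi.+1) ?ltnS //.
rewrite [RHS](big_nat_widenl _ lo) //.
by apply: eq_bigl => i; rewrite ltnS andbC.
Qed.

Lemma rect_sum_box (a : nat -> nat -> R[i]) p q S T F G (L L' : R) :
  F%:R <= L < F.+1%:R -> G%:R <= L' < G.+1%:R ->
  (2 ^ p <= S)%N -> (S + F <= 2 ^ p.+1)%N -> (2 ^ q <= T)%N -> (T + G <= 2 ^ q.+1)%N ->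
  rect_sum a p q S%:R T%:R L L' =
    \sum_(S <= i < (S + F).+1) \sum_(T <= j < (T + G).+1) a i j.
Proof.
move=> hL hL' pS SF qT TG; rewrite /rect_sum.
transitivity (\sum_(2 ^ p <= i < (2 ^ p.+1).+1) if (S <= i <= S + F)%N then
    \sum_(2 ^ q <= j < (2 ^ q.+1).+1) (if (T <= j <= T + G)%N then a i j else 0) else 0).
  apply: eq_bigr => i _; rewrite (ler_nat_window _ _ hL).
  case: (S <= i <= S + F)%N; last by rewrite big1.
  by apply: eq_bigr => j _; rewrite (ler_nat_window _ _ hL').
by rewrite big_nat_window //; apply: eq_bigr => i _; rewrite big_nat_window.
Qed.

End RectSums.

Lemma box_maxn_le k S F M : (0 < k)%N -> (M * F <= k)%N -> (S + F <= k + M * F)%N ->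
  (S + maxn F 1 <= 2 * k)%N.
Proof. by case: (posnP F) => [->|F0]; rewrite ?muln0; lia. Qed.

(* [good] marks the rows where the lower bound on |a| is available: all rows
   under GM1, the even ones under GM2. *)
Lemma exists_box_with_large_sum (R : realType) (a : nat -> nat -> R[i])
    k l F G M X g (good : pred nat) :
  tends0 a -> (0 < k)%N -> (0 < l)%N -> (0 < M)%N ->
  (M * F <= k)%N -> (M * G <= l)%N -> (gm_lhs a k l <= X%:E)%E -> 4 * X <= g *+ M ->
  good k -> (forall x, good x || good x.+1) ->
  (forall P Q, (k <= P <= 2 * k)%N -> (l <= Q <= 2 * l)%N -> good P -> g <= cabs (a P Q)) ->
  exists S T, [/\ (k <= S)%N, (S + maxn F 1 <= 2 * k)%N, (l <= T)%N,
    (T + maxn G 1 <= 2 * l)%N &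
    (g / 2) *+ (F.+1 * G.+1)
      <= cabs (\sum_(S <= i < (S + F).+1) \sum_(T <= j < (T + G).+1) a i j)].
Proof.
move=> a_to0 k0 l0 M0 MFk MGl gmX Xg goodk good1 g_good.
have [S [T [kS SF lT TG flat]]] := exists_flat_box a_to0 k0 l0 M0 MFk MGl gmX.
have [P [SP PS goodP]] : exists P, [/\ (S <= P)%N, (P <= S + F)%N & good P].
  case: (posnP F) => [F0|F0].
    exists S; move: SF; rewrite F0 muln0 !addn0 => Sk.
    by have -> : S = k by apply/eqP; rewrite eqn_leq Sk kS.
  case gS: (good S); first by exists S; rewrite ?leq_addr.
  exists S.+1; split; [exact: leqnSn | by rewrite -addn1 leq_add2l |].
  by have := good1 S; rewrite gS.
have gP : g <= cabs (a P T) by apply: g_good => //; lia.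
have osc i j : (S <= i <= S + F)%N -> (T <= j <= T + G)%N ->
    cabs (a i j - a P T) <= g / 2.
  move=> hi hj; have Sij := flat i j hi hj.
  have SPT := flat P T ltac:(lia) ltac:(lia).
  rewrite -(ler_pMn2r M0).
  apply: le_trans (ler_wMn2r M (cabs_distD _ (a S T) _)) _.
  rewrite mulrnDl cabs_distC -mulrnAl; lra.
exists S, T; split => //; [exact: box_maxn_le MFk SF | exact: box_maxn_le MGl TG |].
apply: le_trans (cabs_box_sum_ge osc); apply: ler_wMn2r; lra.
Qed.

Lemma rect_in_Q_box (R : realType) p q m n v S T :
  (2 ^ p <= S)%N -> (S + maxn (side m v) 1 <= 2 ^ p.+1)%N ->
  (2 ^ q <= T)%N -> (T + maxn (side n v) 1 <= 2 ^ q.+1)%N ->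
  rect_in_Q p q (S%:R : R) T%:R (2 `^ (m%:R - v%:R)) (2 `^ (n%:R - v%:R)).
Proof.
have side_le k w s K : (s + maxn (side k w) 1 <= K)%N ->
    s%:R + 2 `^ (k%:R - w%:R) <= K%:R :> R.
  move=> sK; apply: le_trans (_ : _ <= s%:R + (maxn (side k w) 1)%:R) _.
    by rewrite lerD2l powR_le_maxn_side1.
  by rewrite -natrD ler_nat.
move=> pS Sp qT Tq; rewrite /rect_in_Q !natrXE !ler_nat.
by do ![split] => //; exact: side_le.
Qed.

Lemma expn_le_side1_mul2 m n v :
  (2 ^ (m + n) <= (side m v).+1 * (side n v).+1 * 4 ^ v)%N.
Proof.
rewrite expnD (_ : 4 = 2 * 2)%N // expnMn mulnACA.
exact: leq_mul (expn_le_side1_mul m v) (expn_le_side1_mul n v).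
Qed.

Lemma box_count_gt (R : realType) (K A : R) m n v : 0 < K -> 0 < A ->
  K^-1 / (4 * 4 ^+ v) * 2 ^+ (m + n) * A < (A / K / 2) *+ ((side m v).+1 * (side n v).+1).
Proof.
move=> K0 A0; set N := ((side m v).+1 * (side n v).+1)%N.
rewrite -[_ *+ N]mulr_natr.
have N4 : (2 : R) ^+ (m + n) <= N%:R * 4 ^+ v.
  by rewrite -natrX -(natrX _ 4) -natrM ler_nat; exact: expn_le_side1_mul2.
have AK : 0 < A / K by rewrite divr_gt0.
apply: le_lt_trans (_ : _ <= A / K / 4 * N%:R) _.
  have -> : K^-1 / (4 * 4 ^+ v) * 2 ^+ (m + n) * A = A / K / 4 * (2 ^+ (m + n) / 4 ^+ v).
    by field; rewrite expf_neq0 // gt_eqF.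
  apply: ler_wpM2l; first exact/ltW/divr_gt0.
  by rewrite ler_pdivrMr ?exprn_gt0.
by rewrite ltr_pM2r ?ltr0n ?muln_gt0 //; lra.
Qed.

Lemma exists_pow2_ge (R : realType) (x : R) :
  0 <= x -> exists2 v, (0 < v)%N & x <= (2 ^ v.-1)%N%:R.
Proof.
move=> x0; exists (Num.Def.archi_bound x).+1 => //.
by apply: le_trans (ltW (archi_boundP x0)) _; rewrite ler_nat ltnW // ltn_expl.
Qed.

Lemma exists_large_rect_sum (R : realType) (C T K : R) : 0 <= C -> 0 <= T -> 0 < K ->
  exists c v : R, 0 < c /\ 0 < v /\
  forall (a : nat -> nat -> R[i]) (good : pred nat) m n p q A,
    tends0 a -> (m.-1 <= p)%N -> (n.-1 <= q)%N -> 0 < A ->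
    (gm_lhs a (2 ^ p)%N (2 ^ q)%N <= (C * T * A)%:E)%E ->
    good (2 ^ p)%N -> (forall x, good x || good x.+1) ->
    (forall P Q, (2 ^ p <= P <= 2 ^ p.+1)%N -> (2 ^ q <= Q <= 2 ^ q.+1)%N -> good P ->
       A <= K * cabs (a P Q)) ->
    exists s t : R,
      rect_in_Q p q s t (2 `^ (m%:R - v)) (2 `^ (n%:R - v)) /\
      c * 2 ^+ (m + n) * A < cabs (rect_sum a p q s t (2 `^ (m%:R - v)) (2 `^ (n%:R - v))).
Proof.
move=> C0 T0 K0.
have [v v0 Mv] := @exists_pow2_ge _ (4 * C * T * K) ltac:(by rewrite !mulr_ge0 // ltW).
exists (K^-1 / (4 * 4 ^+ v)), v%:R; split.
  by rewrite divr_gt0 ?invr_gt0 // mulr_gt0 // exprn_gt0.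
split; first by rewrite ltr0n.
move=> a good m n p q A a_to0 mp nq A0 gmX goodk good1 lowA.
have p0 : (0 < 2 ^ p)%N by rewrite expn_gt0.
have q0 : (0 < 2 ^ q)%N by rewrite expn_gt0.
have M0 : (0 < 2 ^ v.-1)%N by rewrite expn_gt0.
have Xg : 4 * (C * T * A) <= (A / K) *+ 2 ^ v.-1.
  rewrite -[X in _ <= X]mulr_natl [X in _ <= X]mulrA ler_pdivlMr //; nra.
have low P Q : (2 ^ p <= P <= 2 * 2 ^ p)%N -> (2 ^ q <= Q <= 2 * 2 ^ q)%N -> good P ->
    A / K <= cabs (a P Q).
  by move=> hP hQ gP; rewrite ler_pdivrMr // mulrC; apply: lowA gP; rewrite expnS.
have [S [T' [pS Sp qT Tq large]]] := exists_box_with_large_sum a_to0 p0 q0 M0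
  (side_mul_le v0 mp) (side_mul_le v0 nq) gmX Xg goodk good1 low.
rewrite -expnS in Sp; rewrite -expnS in Tq.
exists S%:R, T'%:R; split; first exact: rect_in_Q_box.
have SF : (S + side m v <= 2 ^ p.+1)%N by apply: leq_trans Sp; rewrite leq_add2l leq_maxl.
have TG : (T' + side n v <= 2 ^ q.+1)%N by apply: leq_trans Tq; rewrite leq_add2l leq_maxl.
rewrite (rect_sum_box _ (side_floor _ _ _) (side_floor _ _ _) pS SF qT TG).
apply: lt_le_trans large; exact: box_count_gt.
Qed.

Lemma GM1_large_rect_sum (R : realType) (C T : R) : 0 <= C -> 0 <= T ->
  exists c v : R, 0 < c /\ 0 < v /\
    forall a : nat -> nat -> R[i], GM1 C a ->
    forall m n : nat, (1 <= m)%N -> (1 <= n)%N ->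
      0 < Amax a m n ->
      Amax a m.-1 n.-1 <= T * Amax a m n ->
      exists s t : R,
        rect_in_Q m.-1 n.-1 s t (2 `^ (m%:R - v)) (2 `^ (n%:R - v)) /\
        c * 2 ^+ (m + n) * Amax a m n
          < cabs (rect_sum a m.-1 n.-1 s t (2 `^ (m%:R - v)) (2 `^ (n%:R - v))).
Proof.
move=> C0 T0; have pow_gt0 k : (0 < 2 ^ k)%N by rewrite expn_gt0.
have [c [v [c0 [v0 large]]]] := @exists_large_rect_sum _ C T ((1 + C) ^+ 2) C0 T0
  (exprn_gt0 _ (ltr_wpDr C0 ltr01)).
exists c, v; do 2!split => //; move=> a gm m n m0 n0 A0 AT.
apply: (large a xpredT m n _ _ _ gm.1) => //.
  apply: le_trans (gm.2 _ _ (pow_gt0 _) (pow_gt0 _)) _.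
  by rewrite lee_fin -mulrA ler_wpM2l // (le_trans _ AT) // Amax_ge ?leqnn ?leq_pexp2l.
move=> P Q hP hQ _; apply: (GM1_Amax_le C0 gm).
  by rewrite -[m](prednK m0); exact: dyadic_range.
by rewrite -[n](prednK n0); exact: dyadic_range.
Qed.

Lemma GM2_large_rect_sum (R : realType) (C T : R) : 0 <= C -> 0 <= T ->
  exists c v : R, 0 < c /\ 0 < v /\
    forall a : nat -> nat -> R[i], GM2 C a ->
    forall m n : nat, (1 <= n)%N ->
      0 < Amax a m n ->
      Amax a m.+1 n.-1 <= T * Amax a m n ->
      exists s t : R,
        rect_in_Q m.+1 n.-1 s t (2 `^ (m%:R - v)) (2 `^ (n%:R - v)) /\
        c * 2 ^+ (m + n) * Amax a m n
          < cabs (rect_sum a m.+1 n.-1 s t (2 `^ (m%:R - v)) (2 `^ (n%:R - v))).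
Proof.
move=> C0 T0; have pow_gt0 k : (0 < 2 ^ k)%N by rewrite expn_gt0.
have [c [v [c0 [v0 large]]]] := @exists_large_rect_sum _ C T ((1 + 2 * C) ^+ 2) C0 T0
  (exprn_gt0 _ (ltr_wpDr (mulr_ge0 (ler0n _ 2) C0) ltr01)).
exists c, v; do 2!split => //; move=> a gm m n n0 A0 AT.
apply: (large a (fun x => ~~ odd x) m n _ _ _ gm.1) => //.
- exact: leq_trans (leq_pred m) (leqnSn m).
- apply: le_trans (gm.2 _ _ (pow_gt0 _) (pow_gt0 _)) _.
  rewrite lee_fin -mulrA ler_wpM2l // (le_trans _ AT) // Amax_ge //.
    by rewrite -expnS leqnn leq_pexp2l.
  by rewrite leqnn leq_pexp2l.
- by rewrite /= oddX.
- by move=> x /=; case: (odd x).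
move=> P Q hP hQ /= evenP.
have PE : (2 * P./2)%N = P by rewrite mul2n -[RHS]odd_double_half (negbTE evenP).
move: PE hP; set h := P./2 => <- hP; apply: (GM2_Amax_le C0 gm).
  by apply: dyadic_range; move: hP; rewrite !expnS !leq_mul2l.
by rewrite -[n](prednK n0); exact: dyadic_range.
Qed.

Theorem lemma1 (R : realType) (C T : R) (hC : 0 < C) (hT : 0 < T) :
  (exists c v : R, 0 < c /\ 0 < v /\
    forall a : nat -> nat -> R[i], GM1 C a ->
    forall m n : nat, (1 <= m)%N -> (1 <= n)%N ->
      0 < Amax a m n ->
      Amax a m.-1 n.-1 <= T * Amax a m n ->
      exists s t : R,
        rect_in_Q m.-1 n.-1 s t (2 `^ (m%:R - v)) (2 `^ (n%:R - v)) /\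
        c * 2 ^+ (m + n) * Amax a m n
          < cabs (rect_sum a m.-1 n.-1 s t (2 `^ (m%:R - v)) (2 `^ (n%:R - v))))
  /\
  (exists c v : R, 0 < c /\ 0 < v /\
    forall a : nat -> nat -> R[i], GM2 C a ->
    forall m n : nat, (1 <= n)%N ->
      0 < Amax a m n ->
      Amax a m.+1 n.-1 <= T * Amax a m n ->
      exists s t : R,
        rect_in_Q m.+1 n.-1 s t (2 `^ (m%:R - v)) (2 `^ (n%:R - v)) /\
        c * 2 ^+ (m + n) * Amax a m n
          < cabs (rect_sum a m.+1 n.-1 s t (2 `^ (m%:R - v)) (2 `^ (n%:R - v)))).
Proof.
by split; [apply: GM1_large_rect_sum | apply: GM2_large_rect_sum]; exact: ltW.
Qed.
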